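(* Let $\mathcal C$ be a class of groups with $\Lambda$-valued pseudo-norms and let $(G,\ell)$ be a group with a $\Lambda$-valued pseudo-norm. Then the following are equivalent: (1) $(G,\ell)$ is metrically LE$\mathcal C$; (2) for every finitely generated subgroup $L\le G$ (with the restricted pseudo-norm) there are pseudo-normed groups $(L_n,\ell_n)$, $n\in\mathbb N$, and isometric homomorphisms $\varphi_n:(L_n,\ell_n)\to(L_{n+1},\ell_{n+1})$ such that: (i) $L$ is the direct limit of the direct system $(L_n,\varphi_{n,m})$, $\varphi_{n,m}=\varphi_{m-1}\circ\cdots\circ\varphi_n$, via isometric homomorphisms $\psi_n:L_n\to L$ with $\psi_{n+1}\circ\varphi_n=\psi_n$; (ii) for every $n$, every finite $Q\subseteq\Lambda\cap\mathbb Q$ with $0\in Q$ and every finite $E'\subseteq L_n$ on which $\psi_n$ is injective, there is a group homomorphism from $L_n$ to some $(C,\ell_C)\in\mathcal C$ which is an $E'$-$Q$-almost-homomorphism from $(L_n,\ell_n)$ to $(C,\ell_C)$; (iii) each $L_n$ is residually $\mathcal C$ as an abstract group, i.e. for every $g\in L_n\setminus\{1\}$ there are $(C,\ell_C)\in\mathcal C$ and a group homomorphism $L_n\to C$ not sending $g$ to $1$.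
   Context: $\Lambda$ is a closed convex subset of $[0,\infty)$ containing $0$. A pseudo-norm on $G$ is $\ell:G\to\Lambda$ with $\ell(1)=0$, $\ell(g)=\ell(g^{-1})$, $\ell(gh)\le\ell(g)+\ell(h)$. A homomorphism $\phi:(G_1,\ell_1)\to(G_2,\ell_2)$ is isometric if $\ell_2(\phi(h))=\ell_1(h)$ for all $h$. For pseudo-normed $(G_1,\ell_1),(G_2,\ell_2)$, finite $D\subseteq G_1$ and finite $Q\subseteq\Lambda\cap\mathbb Q$ with $0\in Q$, $\varphi:G_1\to G_2$ is a $D$-$Q$-almost-homomorphism if injective on $D$, $\varphi(hg)=\varphi(h)\varphi(g)$ whenever $h,g,hg\in D$, and $\ell_1(g)\,\square\,q\iff\ell_2(\varphi(g))\,\square\,q$ for all $g\in D,q\in Q,\square\in\{<,=,>\}$. $(G,\ell)$ is metrically LE$\mathcal C$ if for every finite $D\subseteq G$ and finite $Q\subseteq\Lambda\cap\mathbb Q$ with $0\in Q$ there are $(C,\ell_C)\in\mathcal C$ and a $D$-$Q$-almost-homomorphism $G\to C$. *)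

From Stdlib Require Import Reals List ProofIrrelevance.
Open Scope R_scope.

Record Grp := {
  gcar :> Type;
  gmul : gcar -> gcar -> gcar;
  gone : gcar;
  ginv : gcar -> gcar;
  gmulA : forall x y z, gmul x (gmul y z) = gmul (gmul x y) z;
  gmul1l : forall x, gmul gone x = x;
  gmul1r : forall x, gmul x gone = x;
  gmulVl : forall x, gmul (ginv x) x = gone;
  gmulVr : forall x, gmul x (ginv x) = gone
}.
Arguments gmul {g}.
Arguments gone {g}.
Arguments ginv {g}.

Definition is_hom {G H : Grp} (f : G -> H) : Prop :=
  forall x y : G, f (gmul x y) = gmul (f x) (f y).

Record PNGrp := { pgrp :> Grp; plen : gcar pgrp -> R }.
Arguments plen {p}.

Definition admissible_Lambda (Lam : R -> Prop) : Prop :=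
  Lam 0 /\
  (forall x, Lam x -> 0 <= x) /\
  (forall x y t, Lam x -> Lam y -> 0 <= t <= 1 -> Lam (t * x + (1 - t) * y)) /\
  (forall x, (forall eps, 0 < eps -> exists y, Lam y /\ Rabs (x - y) < eps) -> Lam x).

Definition pseudo_norm (Lam : R -> Prop) (G : PNGrp) : Prop :=
  (forall g : G, Lam (plen g)) /\
  plen (@gone G) = 0 /\
  (forall g : G, plen g = plen (ginv g)) /\
  (forall g h : G, plen (gmul g h) <= plen g + plen h).

Definition isometric_hom {G1 G2 : PNGrp} (f : G1 -> G2) : Prop :=
  is_hom f /\ forall h : G1, plen (f h) = plen h.

Definition is_rational (x : R) : Prop :=
  exists a b : Z, b <> 0%Z /\ x = IZR a / IZR b.

Definition good_Q (Lam : R -> Prop) (Q : list R) : Prop :=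
  In 0 Q /\ forall q, In q Q -> Lam q /\ is_rational q.

Definition almost_hom {G1 G2 : PNGrp} (D : list (gcar G1)) (Q : list R)
    (phi : G1 -> G2) : Prop :=
  (forall x y, In x D -> In y D -> phi x = phi y -> x = y) /\
  (forall h g, In h D -> In g D -> In (gmul h g) D ->
     phi (gmul h g) = gmul (phi h) (phi g)) /\
  (forall g q, In g D -> In q Q ->
     (plen g < q <-> plen (phi g) < q) /\
     (plen g = q <-> plen (phi g) = q) /\
     (plen g > q <-> plen (phi g) > q)).

Definition metrically_LE (Lam : R -> Prop) (C : PNGrp -> Prop) (G : PNGrp) : Prop :=
  forall (D : list (gcar G)) (Q : list R), good_Q Lam Q ->
    exists X : PNGrp, C X /\ exists phi : G -> X, almost_hom D Q phi.

Inductive gen {G : Grp} (S : list (gcar G)) : gcar G -> Prop :=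
| gen_one : gen S gone
| gen_in : forall x, In x S -> gen S x
| gen_mul : forall x y, gen S x -> gen S y -> gen S (gmul x y)
| gen_inv : forall x, gen S x -> gen S (ginv x).

Section SubGrp.
Variables (G : Grp) (S : list (gcar G)).
Definition sub_car := { x : gcar G | gen S x }.
Definition sub_mul (x y : sub_car) : sub_car :=
  exist _ (gmul (proj1_sig x) (proj1_sig y))
    (gen_mul S _ _ (proj2_sig x) (proj2_sig y)).
Definition sub_one : sub_car := exist _ gone (gen_one S).
Definition sub_inv (x : sub_car) : sub_car :=
  exist _ (ginv (proj1_sig x)) (gen_inv S _ (proj2_sig x)).
Lemma sub_eq (x y : sub_car) : proj1_sig x = proj1_sig y -> x = y.
Proof.
  destruct x as [x px], y as [y py]; simpl; intros ->.
  f_equal; apply proof_irrelevance.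
Qed.
Lemma sub_mulA x y z : sub_mul x (sub_mul y z) = sub_mul (sub_mul x y) z.
Proof. apply sub_eq; simpl; apply gmulA. Qed.
Lemma sub_mul1l x : sub_mul sub_one x = x.
Proof. apply sub_eq; simpl; apply gmul1l. Qed.
Lemma sub_mul1r x : sub_mul x sub_one = x.
Proof. apply sub_eq; simpl; apply gmul1r. Qed.
Lemma sub_mulVl x : sub_mul (sub_inv x) x = sub_one.
Proof. apply sub_eq; simpl; apply gmulVl. Qed.
Lemma sub_mulVr x : sub_mul x (sub_inv x) = sub_one.
Proof. apply sub_eq; simpl; apply gmulVr. Qed.
Definition SubGrp : Grp :=
  Build_Grp sub_car sub_mul sub_one sub_inv
    sub_mulA sub_mul1l sub_mul1r sub_mulVl sub_mulVr.
End SubGrp.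

Definition SubPN (G : PNGrp) (S : list (gcar G)) : PNGrp :=
  {| pgrp := SubGrp G S; plen := fun x => @plen G (proj1_sig x) |}.

(* phi_trans phi n k = phi_{n, k+n} = phi_{k+n-1} o ... o phi_n *)
Fixpoint phi_trans (L : nat -> PNGrp) (phi : forall n, L n -> L (S n))
    (n k : nat) : L n -> L (k + n)%nat :=
  match k return L n -> L (k + n)%nat with
  | O => fun x => x
  | S k' => fun x => phi (k' + n)%nat (phi_trans L phi n k' x)
  end.

Definition is_direct_limit (L : nat -> PNGrp) (phi : forall n, L n -> L (S n))
    (M : Grp) (psi : forall n, L n -> M) : Prop :=
  (forall n, is_hom (psi n)) /\
  (forall n k (x : L n), psi (k + n)%nat (phi_trans L phi n k x) = psi n x) /\
  (forall (H : Grp) (f : forall n, L n -> H),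
     (forall n, is_hom (f n)) ->
     (forall n k (x : L n), f (k + n)%nat (phi_trans L phi n k x) = f n x) ->
     exists g : M -> H, is_hom g /\ (forall n (x : L n), g (psi n x) = f n x) /\
       forall g' : M -> H, is_hom g' -> (forall n (x : L n), g' (psi n x) = f n x) ->
         forall y, g' y = g y).

From Stdlib Require Import Reals List Lia ProofIrrelevance FunctionalExtensionality
  PropExtensionality ClassicalEpsilon Classical Eqdep_dec.
Open Scope R_scope.

(* (1) => (2).  Let M be generated by the finite set S, with balls B_k.  Take
   L_n to be the free group on the elements of M modulo the words that are
   trivial in M and are killed by every map from M to a member of C that is
   injective and multiplicative on B_n; its pseudo-norm is pulled back from M.
   The balls exhaust M, so each relation of M holds in L_n for large n, and M
   is the direct limit.  A map that is an almost-homomorphism on a large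
   enough ball induces a homomorphism on L_n agreeing with it on a prescribed
   finite set, which gives (ii); (iii) holds by the choice of the relators.

   (2) => (1).  Finitely many elements of a direct limit, together with the
   products among them, already live in some L_n.  Composing this partial
   section with the homomorphism given by (ii) yields the required
   almost-homomorphism. *)

Lemma gidem_one (H : Grp) (z : H) : gmul z z = z -> z = gone.
Proof.
  intro E.
  assert (E2 : gmul (ginv z) (gmul z z) = gmul (ginv z) z) by (rewrite E; reflexivity).
  rewrite gmulA, gmulVl, gmul1l in E2. exact E2.
Qed.

Lemma ginv_uniq (H : Grp) (x y : H) : gmul x y = gone -> y = ginv x.
Proof.
  intro E. rewrite <- (gmul1l H y), <- (gmulVl H x), <- gmulA, E, gmul1r.
  reflexivity.
Qed.

Lemma ginv1 (H : Grp) : ginv (@gone H) = gone.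
Proof. symmetry. apply ginv_uniq, gmul1l. Qed.

Lemma ginvK (H : Grp) (x : H) : ginv (ginv x) = x.
Proof. symmetry. apply ginv_uniq, gmulVl. Qed.

Lemma ginvM (H : Grp) (x y : H) : ginv (gmul x y) = gmul (ginv y) (ginv x).
Proof.
  symmetry. apply ginv_uniq.
  rewrite <- gmulA, (gmulA H y), gmulVr, gmul1l. apply gmulVr.
Qed.

Lemma hom1 (H K : Grp) (f : H -> K) : is_hom f -> f gone = gone.
Proof. intro hf. apply gidem_one. rewrite <- hf, gmul1l. reflexivity. Qed.

Lemma homV (H K : Grp) (f : H -> K) (x : H) : is_hom f -> f (ginv x) = ginv (f x).
Proof. intro hf. apply ginv_uniq. rewrite <- hf, gmulVr. apply hom1, hf. Qed.

Definition toSub (G : Grp) (S : list G) (x : G) : SubGrp G S :=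
  match excluded_middle_informative (gen S x) with
  | left p => exist _ x p
  | right _ => sub_one G S
  end.

Lemma toSub_val (G : Grp) (S : list G) (x : G) : gen S x -> proj1_sig (toSub G S x) = x.
Proof.
  intro p. unfold toSub.
  destruct (excluded_middle_informative (gen S x)); simpl; tauto.
Qed.

Lemma toSub_mul (G : Grp) (S : list G) (x y : G) : gen S x -> gen S y ->
  toSub G S (gmul x y) = gmul (toSub G S x) (toSub G S y).
Proof.
  intros px py. apply sub_eq.
  change (proj1_sig (toSub G S (gmul x y))
          = gmul (proj1_sig (toSub G S x)) (proj1_sig (toSub G S y))).
  rewrite !toSub_val; auto. apply gen_mul; auto.
Qed.

Lemma sub_isometric (G : PNGrp) (S : list G) :
  @isometric_hom (SubPN G S) G (@proj1_sig _ _).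
Proof. split; [intros x y | intro x]; reflexivity. Qed.

Lemma pseudo_norm_isometric (Lam : R -> Prop) (G1 G2 : PNGrp) (g : G1 -> G2) :
  isometric_hom g -> pseudo_norm Lam G2 -> pseudo_norm Lam G1.
Proof.
  intros [hg iso] (hLam & h1 & hV & hM). split; [|split; [|split]].
  - intro x. rewrite <- iso. apply hLam.
  - rewrite <- iso, (hom1 _ _ g hg). exact h1.
  - intro x. rewrite <- !iso, (homV _ _ g x hg). apply hV.
  - intros x y. rewrite <- !iso, hg. apply hM.
Qed.

Definition approximating_system (Lam : R -> Prop) (C : PNGrp -> Prop) (G : PNGrp)
    (Sg : list G) (L : nat -> PNGrp) (phi : forall n, L n -> L (S n))
    (psi : forall n, L n -> SubPN G Sg) : Prop :=
  (forall n, pseudo_norm Lam (L n)) /\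
  (forall n, isometric_hom (phi n)) /\
  (forall n, isometric_hom (psi n)) /\
  (forall n (x : L n), psi (S n) (phi n x) = psi n x) /\
  is_direct_limit L phi (SubPN G Sg) psi /\
  (forall n (Q : list R) (E : list (gcar (L n))),
     good_Q Lam Q ->
     (forall x y, In x E -> In y E -> psi n x = psi n y -> x = y) ->
     exists X : PNGrp, C X /\
       exists h : L n -> X, is_hom h /\ almost_hom E Q h) /\
  (forall n (g : L n), g <> gone ->
     exists X : PNGrp, C X /\
       exists h : L n -> X, is_hom h /\ h g <> gone).

(** * Almost-homomorphisms *)

Definition partial_isometry {G1 G2 : PNGrp} (D : list G1) (g : G1 -> G2) : Prop :=
  (forall x y, In x D -> In y D -> g x = g y -> x = y) /\
  (forall x y, In x D -> In y D -> In (gmul x y) D -> g (gmul x y) = gmul (g x) (g y)) /\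
  (forall x, In x D -> plen (g x) = plen x).

Lemma partial_isometry_of_isometric (G1 G2 : PNGrp) (D : list G1) (g : G1 -> G2) :
  isometric_hom g -> (forall x y, In x D -> In y D -> g x = g y -> x = y) ->
  partial_isometry D g.
Proof. intros [hg iso] hinj. split; [exact hinj | split; intros; auto]. Qed.

Lemma partial_isometry_of_section (G1 G2 : PNGrp) (D : list G1)
    (p : G2 -> G1) (s : G1 -> G2) :
  isometric_hom p -> (forall d, In d D -> p (s d) = d) ->
  (forall x y, In x D -> In y D -> In (gmul x y) D -> s (gmul x y) = gmul (s x) (s y)) ->
  partial_isometry D s.
Proof.
  intros [_ iso] hps hs. split; [|split; [exact hs|]].
  - intros x y hx hy E. rewrite <- (hps x hx), <- (hps y hy), E. reflexivity.
  - intros x hx. rewrite <- iso, hps; auto.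
Qed.

Lemma toSub_partial_isometry (G : PNGrp) (S : list G) :
  @partial_isometry G (SubPN G S) S (toSub G S).
Proof.
  apply (partial_isometry_of_section G (SubPN G S) S (@proj1_sig _ _)).
  - apply sub_isometric.
  - intros d hd. apply toSub_val, gen_in, hd.
  - intros x y hx hy _. apply toSub_mul; apply gen_in; auto.
Qed.

Lemma almost_hom_mono (G1 G2 : PNGrp) (D D' : list G1) (Q Q' : list R) (f : G1 -> G2) :
  incl D' D -> incl Q' Q -> almost_hom D Q f -> almost_hom D' Q' f.
Proof.
  intros hD hQ (hinj & hmul & hlen). split; [|split]; intros; auto.
Qed.

Lemma almost_hom_ext (G1 G2 : PNGrp) (D : list G1) (Q : list R) (f f' : G1 -> G2) :
  (forall x, In x D -> f x = f' x) -> almost_hom D Q f -> almost_hom D Q f'.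
Proof.
  intros E (hinj & hmul & hlen). split; [|split].
  - intros x y hx hy Exy. apply hinj; auto. rewrite !E; auto.
  - intros x y hx hy hxy. rewrite <- !E; auto.
  - intros x q hx hq. rewrite <- E; auto.
Qed.

Lemma almost_hom_comp (G1 G2 G3 : PNGrp) (D : list G1) (Q : list R)
    (g : G1 -> G2) (h : G2 -> G3) :
  partial_isometry D g -> almost_hom (map g D) Q h -> almost_hom D Q (fun x => h (g x)).
Proof.
  intros (ginj & gmul_D & giso) (hinj & hmul & hlen). split; [|split].
  - intros x y hx hy E. apply ginj; auto. apply hinj; auto; apply in_map; auto.
  - intros x y hx hy hxy. rewrite gmul_D by auto. apply hmul; try apply in_map; auto.
    rewrite <- gmul_D by auto. apply in_map; auto.
  - intros x q hx hq. rewrite <- (giso x hx). apply hlen; auto. apply in_map; auto.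
Qed.

Lemma almost_hom_one (G1 G2 : PNGrp) (D : list G1) (Q : list R) (f : G1 -> G2) :
  In gone D -> almost_hom D Q f -> f gone = gone.
Proof.
  intros h1 (_ & hmul & _). apply gidem_one.
  rewrite <- hmul; auto; rewrite gmul1l; auto.
Qed.

Lemma almost_hom_inv (G1 G2 : PNGrp) (D : list G1) (Q : list R) (f : G1 -> G2) (x : G1) :
  In gone D -> In x D -> In (ginv x) D -> almost_hom D Q f -> f (ginv x) = ginv (f x).
Proof.
  intros h1 hx hix hf. apply ginv_uniq. pose proof hf as (_ & hmul & _).
  rewrite <- hmul, gmulVr; auto.
  - apply (almost_hom_one _ _ D Q); auto.
  - rewrite gmulVr. exact h1.
Qed.

Lemma good_Q0 (Lam : R -> Prop) : Lam 0 -> good_Q Lam (0 :: nil).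
Proof.
  intro h0. split; [left; reflexivity|]. intros q [<-|[]]. split; auto.
  exists 0%Z, 1%Z. split; [discriminate|]. simpl. unfold Rdiv. ring.
Qed.

Local Open Scope nat_scope.

Definition eventually (P : nat -> Prop) : Prop := exists N, forall m, N <= m -> P m.

Lemma eventually_always (P : nat -> Prop) : (forall m, P m) -> eventually P.
Proof. intro h. exists 0. auto. Qed.

Lemma eventually_ge (n : nat) : eventually (fun m => n <= m).
Proof. exists n. auto. Qed.

Lemma eventually_mono (P P' : nat -> Prop) :
  (forall m, P m -> P' m) -> eventually P -> eventually P'.
Proof. intros h [N hN]. exists N. auto. Qed.

Lemma eventually_and (P P' : nat -> Prop) :
  eventually P -> eventually P' -> eventually (fun m => P m /\ P' m).
Proof. intros [N hN] [N' hN']. exists (max N N'). split; [apply hN|apply hN']; lia. Qed.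

Lemma eventually_upward (P : nat -> Prop) (n : nat) :
  (forall m, P m -> P (S m)) -> P n -> eventually P.
Proof. intros hS hn. exists n. induction 1; auto. Qed.

Lemma eventually_all_in (A : Type) (l : list A) (P : A -> nat -> Prop) :
  (forall a, In a l -> eventually (P a)) -> eventually (fun m => forall a, In a l -> P a m).
Proof.
  induction l as [|a l IH]; intro h.
  - apply eventually_always. intros m b [].
  - destruct (h a (or_introl eq_refl)) as [N1 h1].
    destruct IH as [N2 h2]; [intros; apply h; right; auto|].
    exists (max N1 N2). intros m hm b [<-|hb]; [apply h1|apply h2]; auto; lia.
Qed.

(** * Words and quotient groups *)

Definition word (A : Type) : Type := list (bool * A).

Definition letter {A : Type} {H : Grp} (a : A -> H) (l : bool * A) : H :=
  if fst l then a (snd l) else ginv (a (snd l)).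

Definition evalw {A : Type} {H : Grp} (a : A -> H) (w : word A) : H :=
  fold_right (fun l acc => gmul (letter a l) acc) gone w.

Definition invw {A : Type} (w : word A) : word A :=
  rev (map (fun l => (negb (fst l), snd l)) w).

Lemma evalw_app (A : Type) (H : Grp) (a : A -> H) (w v : word A) :
  evalw a (w ++ v) = gmul (evalw a w) (evalw a v).
Proof.
  induction w as [|l w IH]; simpl.
  - rewrite gmul1l. reflexivity.
  - unfold evalw in *. simpl. rewrite IH, gmulA. reflexivity.
Qed.

Lemma evalw_invw (A : Type) (H : Grp) (a : A -> H) (w : word A) :
  evalw a (invw w) = ginv (evalw a w).
Proof.
  induction w as [|[b x] w IH].
  - symmetry. apply ginv1.
  - unfold invw in *. simpl. rewrite evalw_app, IH. cbn.
    rewrite gmul1r, ginvM. f_equal. unfold letter. destruct b; simpl; auto.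
    symmetry. apply ginvK.
Qed.

Record SetoidGrp := {
  scar :> Type;
  smul : scar -> scar -> scar;
  sone : scar;
  sinv : scar -> scar;
  sequiv : scar -> scar -> Prop;
  sequiv_refl : forall a, sequiv a a;
  sequiv_sym : forall a b, sequiv a b -> sequiv b a;
  sequiv_trans : forall a b c, sequiv a b -> sequiv b c -> sequiv a c;
  sequiv_mul : forall a a' b b', sequiv a a' -> sequiv b b' ->
    sequiv (smul a b) (smul a' b');
  sequiv_inv : forall a a', sequiv a a' -> sequiv (sinv a) (sinv a');
  smulA : forall a b c, sequiv (smul a (smul b c)) (smul (smul a b) c);
  smul1l : forall a, sequiv (smul sone a) a;
  smul1r : forall a, sequiv (smul a sone) a;
  smulVl : forall a, sequiv (smul (sinv a) a) sone;
  smulVr : forall a, sequiv (smul a (sinv a)) sone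
}.

Section Quotient.
Variable P : SetoidGrp.

Definition qcar : Type := { E : P -> Prop | exists a, E = sequiv P a }.
Definition cls (a : P) : qcar := exist _ (sequiv P a) (ex_intro _ a eq_refl).
Definition rep (c : qcar) : P :=
  proj1_sig (constructive_indefinite_description _ (proj2_sig c)).

Lemma cls_rep (c : qcar) : cls (rep c) = c.
Proof.
  destruct c as [E hE]. unfold rep. simpl.
  destruct (constructive_indefinite_description _ hE) as [a ->]. simpl.
  unfold cls. f_equal. apply proof_irrelevance.
Qed.

Lemma cls_eq (a b : P) : sequiv P a b -> cls a = cls b.
Proof.
  intro hab.
  assert (E : sequiv P a = sequiv P b).
  { apply functional_extensionality. intro v. apply propositional_extensionality.
    split; intro h; eapply sequiv_trans; eauto using sequiv_sym. }
  unfold cls. revert E. generalize (ex_intro (fun a' => sequiv P a = sequiv P a') a eq_refl).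
  generalize (ex_intro (fun a' => sequiv P b = sequiv P a') b eq_refl).
  intros hb ha E. revert ha. rewrite E. intro ha. f_equal. apply proof_irrelevance.
Qed.

Lemma cls_inj (a b : P) : cls a = cls b -> sequiv P a b.
Proof.
  intro E. apply (f_equal (@proj1_sig _ _)) in E. simpl in E.
  rewrite E. apply sequiv_refl.
Qed.

Lemma rep_cls (a : P) : sequiv P (rep (cls a)) a.
Proof. apply cls_inj, cls_rep. Qed.

Definition qmul (c d : qcar) : qcar := cls (smul P (rep c) (rep d)).
Definition qinv (c : qcar) : qcar := cls (sinv P (rep c)).

Lemma qmul_cls (a b : P) : qmul (cls a) (cls b) = cls (smul P a b).
Proof. apply cls_eq, sequiv_mul; apply rep_cls. Qed.

Lemma qinv_cls (a : P) : qinv (cls a) = cls (sinv P a).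
Proof. apply cls_eq, sequiv_inv, rep_cls. Qed.

Lemma qmulA (x y z : qcar) : qmul x (qmul y z) = qmul (qmul x y) z.
Proof.
  rewrite <- (cls_rep x), <- (cls_rep y), <- (cls_rep z), !qmul_cls.
  apply cls_eq, smulA.
Qed.

Lemma qmul1l (x : qcar) : qmul (cls (sone P)) x = x.
Proof. rewrite <- (cls_rep x), qmul_cls. apply cls_eq, smul1l. Qed.

Lemma qmul1r (x : qcar) : qmul x (cls (sone P)) = x.
Proof. rewrite <- (cls_rep x), qmul_cls. apply cls_eq, smul1r. Qed.

Lemma qmulVl (x : qcar) : qmul (qinv x) x = cls (sone P).
Proof. rewrite <- (cls_rep x), qinv_cls, qmul_cls. apply cls_eq, smulVl. Qed.

Lemma qmulVr (x : qcar) : qmul x (qinv x) = cls (sone P).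
Proof. rewrite <- (cls_rep x), qinv_cls, qmul_cls. apply cls_eq, smulVr. Qed.

Definition QuotGrp : Grp :=
  Build_Grp qcar qmul (cls (sone P)) qinv qmulA qmul1l qmul1r qmulVl qmulVr.

End Quotient.

Section PredSubgroup.
Variables (H : Grp) (P : H -> Prop).
Hypothesis P1 : P gone.
Hypothesis Pmul : forall x y, P x -> P y -> P (gmul x y).
Hypothesis Pinv : forall x, P x -> P (ginv x).

Definition ps_car : Type := { x : H | P x }.

Lemma ps_eq (x y : ps_car) : proj1_sig x = proj1_sig y -> x = y.
Proof. destruct x, y; simpl; intros ->; f_equal; apply proof_irrelevance. Qed.

Definition ps_mul (x y : ps_car) : ps_car :=
  exist _ (gmul (proj1_sig x) (proj1_sig y)) (Pmul _ _ (proj2_sig x) (proj2_sig y)).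
Definition ps_inv (x : ps_car) : ps_car := exist _ (ginv (proj1_sig x)) (Pinv _ (proj2_sig x)).

Definition PredSubGrp : Grp.
Proof.
  refine (Build_Grp ps_car ps_mul (exist _ gone P1) ps_inv _ _ _ _ _);
    intros; apply ps_eq; simpl.
  - apply gmulA.
  - apply gmul1l.
  - apply gmul1r.
  - apply gmulVl.
  - apply gmulVr.
Defined.

End PredSubgroup.

(** * The direct system of a finitely generated subgroup *)

Section Approximation.
Variables (Lam : R -> Prop) (C : PNGrp -> Prop) (G : PNGrp) (Sg : list G).

Local Notation M := (SubPN G Sg).
Local Notation valw := (@evalw _ (pgrp M) (fun y => y)).

Fixpoint ball (k : nat) : list M :=
  match k with
  | 0 => gone :: map (toSub G Sg) Sg
  | S k => ball k ++ map ginv (ball k)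
           ++ map (fun p => gmul (fst p) (snd p)) (list_prod (ball k) (ball k))
  end.

Lemma ball_mono (k k' : nat) : k <= k' -> incl (ball k) (ball k').
Proof. induction 1; [apply incl_refl|]. intros y hy. apply in_or_app. auto. Qed.

Lemma ball_one (k : nat) : In gone (ball k).
Proof. apply (ball_mono 0); [lia | left; reflexivity]. Qed.

Lemma ball_inv (k : nat) (y : M) : In y (ball k) -> In (ginv y) (ball (S k)).
Proof. intro h. simpl. apply in_or_app. right. apply in_or_app. left. apply in_map, h. Qed.

Lemma ball_mul (k : nat) (x y : M) :
  In x (ball k) -> In y (ball k) -> In (gmul x y) (ball (S k)).
Proof.
  intros hx hy. simpl. apply in_or_app. right. apply in_or_app. right.
  apply (in_map (fun p => gmul (fst p) (snd p)) _ (x, y)). apply in_prod; auto.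
Qed.

Lemma ball_exhaustive (y : M) : eventually (fun k => In y (ball k)).
Proof.
  destruct y as [x p].
  assert (Hz : exists k (z : M), In z (ball k) /\ proj1_sig z = x).
  { induction p as [| x hx | x y _ [k1 [z1 [h1 <-]]] _ [k2 [z2 [h2 <-]]] | x _ [k [z [h <-]]]].
    - exists 0, gone. split; [apply ball_one | reflexivity].
    - exists 0, (toSub G Sg x). split; [right; apply in_map, hx|].
      apply toSub_val, gen_in, hx.
    - exists (S (max k1 k2)), (gmul z1 z2). split; [|reflexivity].
      apply ball_mul; [apply (ball_mono k1)|apply (ball_mono k2)]; auto; lia.
    - exists (S k), (ginv z). split; [apply ball_inv, h | reflexivity]. }
  destruct Hz as (k & z & hz & <-).
  rewrite (sub_eq G Sg (exist _ (proj1_sig z) p) z eq_refl).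
  apply (eventually_upward _ k); [|exact hz]. intros m hm. apply (ball_mono m); auto.
Qed.

Definition ball_embedding (n : nat) (X : PNGrp) (f : M -> X) : Prop :=
  C X /\ almost_hom (ball n) nil f.

Lemma ball_embedding_antitone (n m : nat) (X : PNGrp) (f : M -> X) :
  n <= m -> ball_embedding m X f -> ball_embedding n X f.
Proof.
  intros hnm [hX hf]. split; [exact hX|].
  apply (almost_hom_mono _ _ (ball m) _ nil); auto using ball_mono, incl_refl.
Qed.

Lemma evalw_ball_embedding (w : word M) :
  eventually (fun n => forall X f, ball_embedding n X f -> evalw f w = f (valw w)).
Proof.
  induction w as [|[b x] w IH].
  - apply eventually_always. intros n X f [_ hf]. symmetry.
    apply (almost_hom_one _ _ (ball n) nil); auto using ball_one.
  - destruct (eventually_and _ _ IH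
                (eventually_and _ _ (ball_exhaustive x) (ball_exhaustive (valw w))))
      as [N hN].
    exists (S (S N)). intros m hm X f [hX hf].
    destruct (hN N (le_n N)) as (_ & hx & hw).
    assert (hsub : incl (ball (S (S N))) (ball m)) by (apply ball_mono; lia).
    assert (hl : In (letter (fun y : M => y) (b, x)) (ball (S N))).
    { destruct b; [exact (ball_mono N (S N) ltac:(lia) x hx) | exact (ball_inv N x hx)]. }
    change (gmul (letter f (b, x)) (evalw f w)
            = f (gmul (letter (fun y : M => y) (b, x)) (valw w))).
    pose proof hf as (_ & hmul & _).
    rewrite hmul, (proj1 (hN m ltac:(lia)) X f (conj hX hf)).
    + f_equal. destruct b; [reflexivity|]. symmetry.
      apply (almost_hom_inv _ _ (ball m) nil); auto using ball_one.
      * apply hsub, (ball_mono N); auto.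
      * apply hsub, (ball_mono (S N)); auto.
    + apply hsub, (ball_mono (S N)); auto.
    + apply hsub, (ball_mono N); auto.
    + apply hsub, ball_mul; auto. apply (ball_mono N); auto.
Qed.

Definition eqv (n : nat) (w v : word M) : Prop :=
  valw w = valw v /\ forall X f, ball_embedding n X f -> evalw f w = evalw f v.

Lemma eqv_of_law (n : nat) (w v : word M) :
  (forall (H : Grp) (a : M -> H), evalw a w = evalw a v) -> eqv n w v.
Proof. intro h. split; [apply h|]. intros. apply h. Qed.

Lemma eqv_mono (n m : nat) (w v : word M) : n <= m -> eqv n w v -> eqv m w v.
Proof.
  intros h [h1 h2]. split; auto. intros X f hf. apply h2, (ball_embedding_antitone n m); auto.
Qed.

Definition word_setoid (n : nat) : SetoidGrp.
Proof.
  refine (Build_SetoidGrp (word M) (@app _) nil (@invw _) (eqv n) _ _ _ _ _ _ _ _ _ _).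
  - intro w. apply eqv_of_law. reflexivity.
  - intros w v [h1 h2]. split; auto. intros X f hf. symmetry. apply h2, hf.
  - intros u w v [h1 h2] [h3 h4]. split; [congruence|].
    intros X f hf. rewrite h2, h4; auto.
  - intros a a' b b' [h1 h2] [h3 h4]. split.
    + rewrite !evalw_app. congruence.
    + intros X f hf. rewrite !evalw_app, h2, h4; auto.
  - intros a a' [h1 h2]. split.
    + rewrite !evalw_invw. congruence.
    + intros X f hf. rewrite !evalw_invw, h2; auto.
  - intros a b c. apply eqv_of_law. intros. rewrite app_assoc. reflexivity.
  - intro a. apply eqv_of_law. reflexivity.
  - intro a. apply eqv_of_law. intros. rewrite app_nil_r. reflexivity.
  - intro a. apply eqv_of_law. intros. rewrite evalw_app, evalw_invw, gmulVl. reflexivity.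
  - intro a. apply eqv_of_law. intros. rewrite evalw_app, evalw_invw, gmulVr. reflexivity.
Defined.

Definition Lgrp (n : nat) : Grp := QuotGrp (word_setoid n).
Definition clsL (n : nat) (w : word M) : Lgrp n := cls (word_setoid n) w.
Definition repL (n : nat) (c : Lgrp n) : word M := rep (word_setoid n) c.

Lemma clsL_rep (n : nat) (c : Lgrp n) : clsL n (repL n c) = c.
Proof. apply cls_rep. Qed.

Lemma clsL_eq (n : nat) (w v : word M) : eqv n w v -> clsL n w = clsL n v.
Proof. apply (cls_eq (word_setoid n)). Qed.

Lemma repL_cls (n : nat) (w : word M) : eqv n (repL n (clsL n w)) w.
Proof. apply (rep_cls (word_setoid n)). Qed.

Lemma clsL_app (n : nat) (w v : word M) : gmul (clsL n w) (clsL n v) = clsL n (w ++ v).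
Proof. apply (qmul_cls (word_setoid n)). Qed.

Definition psiL (n : nat) (c : Lgrp n) : M := valw (repL n c).

Definition Lpn (n : nat) : PNGrp := Build_PNGrp (Lgrp n) (fun c => plen (psiL n c)).

Definition phiL (n : nat) (c : Lpn n) : Lpn (S n) := clsL (S n) (repL n c).

Definition induced (n : nat) (X : PNGrp) (f : M -> X) (c : Lgrp n) : X :=
  evalw f (repL n c).

Lemma psiL_cls (n : nat) (w : word M) : psiL n (clsL n w) = valw w.
Proof. exact (proj1 (repL_cls n w)). Qed.

Lemma psiL_isometric (n : nat) : @isometric_hom (Lpn n) M (psiL n).
Proof.
  split; [|reflexivity]. intros c d.
  rewrite <- (clsL_rep n c), <- (clsL_rep n d).
  change (psiL n (gmul (clsL n (repL n c)) (clsL n (repL n d)))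
          = gmul (psiL n (clsL n (repL n c))) (psiL n (clsL n (repL n d)))).
  rewrite clsL_app, !psiL_cls, evalw_app. reflexivity.
Qed.

Lemma phiL_cls (n : nat) (w : word M) : phiL n (clsL n w) = clsL (S n) w.
Proof. apply clsL_eq, (eqv_mono n); [lia | apply repL_cls]. Qed.

Lemma psiL_phiL (n : nat) (c : Lpn n) : psiL (S n) (phiL n c) = psiL n c.
Proof. rewrite <- (clsL_rep n c), phiL_cls, !psiL_cls. reflexivity. Qed.

Lemma phiL_isometric (n : nat) : isometric_hom (phiL n).
Proof.
  split.
  - intros c d. rewrite <- (clsL_rep n c), <- (clsL_rep n d).
    change (phiL n (gmul (clsL n (repL n c)) (clsL n (repL n d)))
            = gmul (phiL n (clsL n (repL n c))) (phiL n (clsL n (repL n d)))).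
    rewrite clsL_app, !phiL_cls. symmetry. apply clsL_app.
  - intro c. apply (f_equal plen (psiL_phiL n c)).
Qed.

Lemma phiL_trans_cls (n k : nat) (w : word M) :
  phi_trans Lpn phiL n k (clsL n w) = clsL (k + n) w.
Proof. induction k as [|k IH]; simpl; [reflexivity|]. rewrite IH. apply phiL_cls. Qed.

Lemma induced_cls (n : nat) (X : PNGrp) (f : M -> X) (w : word M) :
  ball_embedding n X f -> induced n X f (clsL n w) = evalw f w.
Proof. intro hf. apply (proj2 (repL_cls n w) X f hf). Qed.

Lemma induced_hom (n : nat) (X : PNGrp) (f : M -> X) :
  ball_embedding n X f -> @is_hom (Lpn n) X (induced n X f).
Proof.
  intros hf c d. rewrite <- (clsL_rep n c), <- (clsL_rep n d).
  change (induced n X f (gmul (clsL n (repL n c)) (clsL n (repL n d)))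
          = gmul (induced n X f (clsL n (repL n c))) (induced n X f (clsL n (repL n d)))).
  rewrite clsL_app, !induced_cls, evalw_app; auto.
Qed.

Lemma induced_agrees (n : nat) (c : Lpn n) :
  eventually (fun K => In (psiL n c) (ball K) /\
                      forall X f, ball_embedding K X f -> induced n X f c = f (psiL n c)).
Proof. apply eventually_and; [apply ball_exhaustive | apply evalw_ball_embedding]. Qed.

Lemma L_direct_limit : is_direct_limit Lpn phiL M psiL.
Proof.
  split; [|split].
  - intro n. apply psiL_isometric.
  - intros n k c. rewrite <- (clsL_rep n c), phiL_trans_cls, !psiL_cls. reflexivity.
  - intros H f hf hc.
    assert (f_cls : forall n w, f n (clsL n w) = f 0 (clsL 0 w)).
    { intros n w. pose proof (hc 0 n (clsL 0 w)) as E.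
      rewrite phiL_trans_cls, Nat.add_0_r in E. exact E. }
    assert (f_wd : forall w v, valw w = valw v -> f 0 (clsL 0 w) = f 0 (clsL 0 v)).
    { intros w v E.
      destruct (eventually_and _ _ (evalw_ball_embedding w) (evalw_ball_embedding v)) as [m hm].
      rewrite <- (f_cls m w), <- (f_cls m v). f_equal. apply clsL_eq.
      split; [exact E|]. intros X g hg.
      destruct (hm m (le_n m)) as [hw hv]. rewrite hw, hv, E; auto. }
    assert (single : forall y : M, valw ((true, y) :: nil) = y) by apply gmul1r.
    exists (fun y => f 0 (clsL 0 ((true, y) :: nil))). split; [|split].
    + intros x y. rewrite <- hf. change (@gmul (Lpn 0)) with (@gmul (Lgrp 0)).
      rewrite clsL_app. apply f_wd.
      rewrite single, evalw_app, !single. reflexivity.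
    + intros n c. rewrite <- (clsL_rep n c) at 2. rewrite (f_cls n).
      apply f_wd. rewrite single. reflexivity.
    + intros g' hg' hfg y. rewrite <- (single y) at 1. rewrite <- (psiL_cls 0). apply hfg.
Qed.

Hypothesis HLam0 : Lam 0%R.
Hypothesis HG : pseudo_norm Lam G.
Hypothesis HLE : metrically_LE Lam C G.

Lemma ball_almost_hom (K : nat) (Q : list R) :
  good_Q Lam Q -> exists (X : PNGrp) (f : M -> X), C X /\ almost_hom (ball K) Q f.
Proof.
  intro hQ. destruct (HLE (map (@proj1_sig _ _) (ball K)) Q hQ) as (X & hX & f & hf).
  exists X, (fun y => f (proj1_sig y)). split; [exact hX|].
  apply almost_hom_comp; [|exact hf].
  apply partial_isometry_of_isometric; [apply sub_isometric|].
  intros x y _ _. apply sub_eq.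
Qed.

Lemma L_almost_homs (n : nat) (Q : list R) (E : list (Lpn n)) :
  good_Q Lam Q -> (forall x y, In x E -> In y E -> psiL n x = psiL n y -> x = y) ->
  exists X, C X /\ exists h : Lpn n -> X, is_hom h /\ almost_hom E Q h.
Proof.
  intros hQ hinj.
  destruct (eventually_and _ _ (eventually_ge n)
              (eventually_all_in _ E _ (fun c _ => induced_agrees n c))) as [K hK].
  destruct (hK K (le_n K)) as [hnK hE].
  destruct (ball_almost_hom K Q hQ) as (X & f & hX & hf).
  assert (hemb : ball_embedding K X f).
  { split; [exact hX|]. apply (almost_hom_mono _ _ (ball K) _ Q); auto using incl_refl.
    intros q []. }
  exists X. split; [exact hX|]. exists (induced n X f).
  split; [apply induced_hom, (ball_embedding_antitone n K); auto|].
  apply (almost_hom_ext _ _ E Q (fun c => f (psiL n c))).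
  { intros c hc. symmetry. apply (hE c hc), hemb. }
  apply almost_hom_comp.
  - apply partial_isometry_of_isometric; [apply psiL_isometric | exact hinj].
  - apply (almost_hom_mono _ _ (ball K) _ Q); auto using incl_refl.
    intros y hy. apply in_map_iff in hy as (c & <- & hc). apply (hE c hc).
Qed.

Lemma L_residually (n : nat) (c : Lpn n) :
  c <> gone -> exists X, C X /\ exists h : Lpn n -> X, is_hom h /\ h c <> gone.
Proof.
  intro hc. apply NNPP. intro hno.
  assert (killed : forall X f, ball_embedding n X f -> induced n X f c = gone).
  { intros X f hf. apply NNPP. intro hne. apply hno.
    exists X. split; [apply hf|]. exists (induced n X f). split; auto using induced_hom. }
  assert (hpsi : psiL n c = gone).
  { destruct (eventually_and _ _ (eventually_ge n) (induced_agrees n c)) as [K hK].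
    destruct (hK K (le_n K)) as (hnK & hin & heval).
    destruct (ball_almost_hom K (0%R :: nil) (good_Q0 Lam HLam0)) as (X & f & hX & hf).
    assert (hemb : ball_embedding K X f).
    { split; [exact hX|]. apply (almost_hom_mono _ _ (ball K) _ (0%R :: nil)); auto using incl_refl.
      intros q []. }
    apply (proj1 hf); [exact hin | apply ball_one |].
    rewrite (almost_hom_one _ _ (ball K) nil f); [| apply ball_one | exact (proj2 hemb)].
    rewrite <- heval by exact hemb. apply killed, (ball_embedding_antitone n K); auto. }
  apply hc. rewrite <- (clsL_rep n c). change (clsL n (repL n c) = clsL n nil).
  apply clsL_eq. split; [exact hpsi | exact killed].
Qed.

Lemma approximating_system_of_LE :
  exists (L : nat -> PNGrp) (phi : forall n, L n -> L (S n))
         (psi : forall n, L n -> SubPN G Sg),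
    approximating_system Lam C G Sg L phi psi.
Proof.
  exists Lpn, phiL, psiL.
  split; [|split; [|split; [|split; [|split; [|split]]]]].
  - intro n. apply (pseudo_norm_isometric _ (Lpn n) (SubPN G Sg) (psiL n)); [apply psiL_isometric|].
    apply (pseudo_norm_isometric _ (SubPN G Sg) G (@proj1_sig _ _));
      [apply sub_isometric | exact HG].
  - exact phiL_isometric.
  - exact psiL_isometric.
  - exact psiL_phiL.
  - exact L_direct_limit.
  - exact L_almost_homs.
  - exact L_residually.
Qed.

End Approximation.

(** * Finite pieces of a direct limit *)

Section DirectLimit.
Variables (L : nat -> PNGrp) (phi : forall n, L n -> L (S n)) (M : Grp)
  (psi : forall n, L n -> M).
Hypothesis phi_hom : forall n, is_hom (phi n).
Hypothesis limit : is_direct_limit L phi M psi.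

Lemma psi_hom (n : nat) : is_hom (psi n).
Proof. apply (proj1 limit). Qed.

Lemma psi_step (n : nat) (x : L n) : psi (S n) (phi n x) = psi n x.
Proof. exact (proj1 (proj2 limit) n 1 x). Qed.

(* The image of [x] in [L m] when [n <= m]; junk value [1] when [m < n]. *)
Fixpoint phi_to (n : nat) (x : L n) (m : nat) : L m :=
  match m with
  | 0 => match Nat.eq_dec n 0 with
         | left e => eq_rect n (fun k => gcar (L k)) x 0 e
         | right _ => gone
         end
  | S m' => match Nat.eq_dec n (S m') with
            | left e => eq_rect n (fun k => gcar (L k)) x (S m') e
            | right _ => phi m' (phi_to n x m')
            end
  end.

Lemma phi_to_S (n m : nat) (x : L n) : n <> S m -> phi_to n x (S m) = phi m (phi_to n x m).
Proof. intro h. simpl. destruct (Nat.eq_dec n (S m)); [contradiction | reflexivity]. Qed.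

Lemma phi_to_self (n : nat) (x : L n) : phi_to n x n = x.
Proof.
  destruct n as [|n]; [reflexivity|]. cbn -[Nat.eq_dec].
  destruct (Nat.eq_dec (S n) (S n)) as [e|e]; [|contradiction].
  rewrite (UIP_refl_nat _ e). reflexivity.
Qed.

Lemma phi_to_trans (n k : nat) (x : L n) : phi_to n x (k + n) = phi_trans L phi n k x.
Proof.
  induction k as [|k IH]; [apply phi_to_self|].
  change (phi_to n x (S (k + n)) = phi (k + n) (phi_trans L phi n k x)).
  rewrite phi_to_S, IH by lia. reflexivity.
Qed.

Lemma phi_to_comp (n m m' : nat) (x : L n) :
  n <= m -> m <= m' -> phi_to n x m' = phi_to m (phi_to n x m) m'.
Proof.
  intros h1 h2. induction h2 as [|m' h IH]; [rewrite phi_to_self; reflexivity|].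
  rewrite !phi_to_S, IH by lia. reflexivity.
Qed.

Lemma phi_to_mul (n m : nat) (x y : L n) :
  phi_to n (gmul x y) m = gmul (phi_to n x m) (phi_to n y m).
Proof.
  induction m as [|m IH]; simpl.
  - destruct (Nat.eq_dec n 0) as [e|e]; [subst n; reflexivity | symmetry; apply gmul1l].
  - destruct (Nat.eq_dec n (S m)) as [e|e]; [subst n; reflexivity|].
    rewrite IH. apply phi_hom.
Qed.

Lemma psi_phi_to (n m : nat) (x : L n) : n <= m -> psi m (phi_to n x m) = psi n x.
Proof.
  induction 1 as [|m h IH]; [rewrite phi_to_self; reflexivity|].
  rewrite phi_to_S, psi_step by lia. exact IH.
Qed.

(* Sequences up to eventual equality receive a cocone from the system, so the
   universal property pulls equalities in [M] back to the [L n]. *)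
Definition germ_setoid : SetoidGrp.
Proof.
  refine (Build_SetoidGrp (forall m, L m) (fun s t m => gmul (s m) (t m)) (fun _ => gone)
            (fun s m => ginv (s m)) (fun s t => eventually (fun m => s m = t m))
            _ _ _ _ _ _ _ _ _ _).
  - intro s. apply eventually_always. reflexivity.
  - intros s t. apply eventually_mono. intros m h. symmetry. exact h.
  - intros s t u h1 h2. apply (eventually_mono (fun m => s m = t m /\ t m = u m)).
    + intros m [-> ->]. reflexivity.
    + apply eventually_and; assumption.
  - intros a a' b b' h1 h2. apply (eventually_mono (fun m => a m = a' m /\ b m = b' m)).
    + intros m [-> ->]. reflexivity.
    + apply eventually_and; assumption.
  - intros a a'. apply eventually_mono. intros m ->. reflexivity.
  - intros a b c. apply eventually_always. intro m. apply gmulA.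
  - intro a. apply eventually_always. intro m. apply gmul1l.
  - intro a. apply eventually_always. intro m. apply gmul1r.
  - intro a. apply eventually_always. intro m. apply gmulVl.
  - intro a. apply eventually_always. intro m. apply gmulVr.
Defined.

Lemma psi_eventually_eq (n : nat) (x x' : L n) :
  psi n x = psi n x' -> eventually (fun m => phi_to n x m = phi_to n x' m).
Proof.
  intro E.
  set (germ := fun k (y : L k) => cls germ_setoid (phi_to k y) : QuotGrp germ_setoid).
  destruct (proj2 (proj2 limit) (QuotGrp germ_setoid) germ) as (g & _ & hg & _).
  - intros k a b. unfold germ. symmetry.
    etransitivity; [apply (qmul_cls germ_setoid)|]. apply cls_eq.
    apply eventually_always. intro m. symmetry. apply phi_to_mul.
  - intros k j a. apply cls_eq. exists (j + k). intros m hm.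
    rewrite (phi_to_comp k (j + k) m a), phi_to_trans by lia. reflexivity.
  - apply (cls_inj germ_setoid). change (germ n x = germ n x').
    rewrite <- !hg, E. reflexivity.
Qed.

Lemma psi_surjective (y : M) : exists n x, psi n x = y.
Proof.
  set (P := fun y => exists n x, psi n x = y).
  assert (P1 : P gone) by (exists 0, gone; apply hom1, psi_hom).
  assert (Pmul : forall a b, P a -> P b -> P (gmul a b)).
  { intros a b (n & x & <-) (m & z & <-).
    exists (n + m), (gmul (phi_to n x (n + m)) (phi_to m z (n + m))).
    rewrite psi_hom, !psi_phi_to by lia. reflexivity. }
  assert (Pinv : forall a, P a -> P (ginv a)).
  { intros a (n & x & <-). exists n, (ginv x). apply homV, psi_hom. }
  set (I := PredSubGrp M P P1 Pmul Pinv).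
  set (inI := fun n x => exist P (psi n x) (ex_intro _ n (ex_intro _ x eq_refl)) : I).
  destruct (proj2 (proj2 limit) I inI) as (g & hg & hgI & _).
  - intros n a b. apply ps_eq. apply psi_hom.
  - intros n k a. apply ps_eq. apply (proj1 (proj2 limit)).
  - destruct (proj2 (proj2 limit) M psi psi_hom (proj1 (proj2 limit)))
      as (g0 & _ & _ & uniq).
    assert (E1 : proj1_sig (g y) = g0 y).
    { apply (uniq (fun y => proj1_sig (g y))).
      - intros a b. rewrite hg. reflexivity.
      - intros n x. rewrite hgI. reflexivity. }
    assert (E2 : y = g0 y) by (apply (uniq (fun y => y)); [intros a b | intros n x]; reflexivity).
    pose proof (proj2_sig (g y)) as hy. simpl in hy. rewrite E1, <- E2 in hy. exact hy.
Qed.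

Lemma finite_section (D : list M) :
  exists K (s : M -> L K),
    (forall d, In d D -> psi K (s d) = d) /\
    (forall d1 d2, In d1 D -> In d2 D -> In (gmul d1 d2) D ->
       s (gmul d1 d2) = gmul (s d1) (s d2)).
Proof.
  assert (lifts : eventually (fun N => forall d, In d D -> exists e : L N, psi N e = d)).
  { apply eventually_all_in. intros d _. destruct (psi_surjective d) as (n & x & hx).
    exists n. intros m hm. exists (phi_to n x m). rewrite psi_phi_to; auto. }
  destruct lifts as [N hN].
  set (s0 := fun d => epsilon (inhabits gone) (fun e : L N => In d D -> psi N e = d)).
  assert (hs0 : forall d, In d D -> psi N (s0 d) = d).
  { intros d hd. refine (@epsilon_spec _ _ (fun e : L N => In d D -> psi N e = d) _ hd).
    destruct (hN N (le_n N) d hd) as [e he]. exists e. auto. }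
  assert (rel : eventually (fun m => forall p, In p (list_prod D D) ->
    In (gmul (fst p) (snd p)) D ->
    phi_to N (gmul (s0 (fst p)) (s0 (snd p))) m = phi_to N (s0 (gmul (fst p) (snd p))) m)).
  { apply eventually_all_in. intros [d1 d2] hp. apply in_prod_iff in hp as [h1 h2].
    destruct (classic (In (gmul d1 d2) D)) as [h12|h12].
    - apply (eventually_mono _ _ (fun m hm _ => hm)), psi_eventually_eq.
      simpl. rewrite psi_hom, !hs0; auto.
    - apply eventually_always. intros m h. contradiction. }
  destruct (eventually_and _ _ (eventually_ge N) rel) as [K hK].
  destruct (hK K (le_n K)) as [hNK hrel].
  exists K, (fun d => phi_to N (s0 d) K). split.
  - intros d hd. rewrite psi_phi_to, hs0; auto.
  - intros d1 d2 h1 h2 h12. rewrite <- phi_to_mul. symmetry.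
    apply (hrel (d1, d2)); [apply in_prod|]; auto.
Qed.

End DirectLimit.

Lemma LE_of_approximating_systems (Lam : R -> Prop) (C : PNGrp -> Prop) (G : PNGrp) :
  (forall Sg : list G, exists L phi psi, approximating_system Lam C G Sg L phi psi) ->
  metrically_LE Lam C G.
Proof.
  intros happrox D Q hQ.
  destruct (happrox D) as (L & phi & psi & _ & hphi & hpsi & _ & hlim & hii & _).
  destruct (finite_section L phi _ psi (fun n => proj1 (hphi n)) hlim (map (toSub G D) D))
    as (K & s & hs & hsmul).
  assert (hs_iso : @partial_isometry (SubPN G D) (L K) (map (toSub G D) D) s)
    by (apply (partial_isometry_of_section (SubPN G D) (L K) _ (psi K)); auto).
  destruct (hii K Q (map s (map (toSub G D) D)) hQ) as (X & hX & h & _ & hh).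
  { intros x y hx hy E. apply in_map_iff in hx as (a & <- & ha), hy as (b & <- & hb).
    rewrite !hs in E by auto. subst. reflexivity. }
  exists X. split; [exact hX|]. exists (fun d => h (s (toSub G D d))).
  apply (almost_hom_comp G (SubPN G D) X _ _ (toSub G D) (fun y => h (s y)));
    [apply toSub_partial_isometry|].
  apply almost_hom_comp; assumption.
Qed.

Theorem mainTheorem19 (Lam : R -> Prop) (C : PNGrp -> Prop) (G : PNGrp)
  (HLam : admissible_Lambda Lam)
  (HC : forall X, C X -> pseudo_norm Lam X)
  (HG : pseudo_norm Lam G) :
  metrically_LE Lam C G <->
  (forall Sg : list (gcar G),
     exists (L : nat -> PNGrp) (phi : forall n, L n -> L (S n))
            (psi : forall n, L n -> SubPN G Sg),
       (forall n, pseudo_norm Lam (L n)) /\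
       (forall n, isometric_hom (phi n)) /\
       (* (i) *)
       (forall n, isometric_hom (psi n)) /\
       (forall n (x : L n), psi (S n) (phi n x) = psi n x) /\
       is_direct_limit L phi (SubPN G Sg) psi /\
       (* (ii) *)
       (forall n (Q : list R) (E : list (gcar (L n))),
          good_Q Lam Q ->
          (forall x y, In x E -> In y E -> psi n x = psi n y -> x = y) ->
          exists X : PNGrp, C X /\
            exists h : L n -> X, is_hom h /\ almost_hom E Q h) /\
       (* (iii) *)
       (forall n (g : L n), g <> gone ->
          exists X : PNGrp, C X /\
            exists h : L n -> X, is_hom h /\ h g <> gone)).
Proof.
  split.
  - intros hLE Sg. exact (approximating_system_of_LE Lam C G Sg (proj1 HLam) HG hLE).
  - apply LE_of_approximating_systems.
Qed.
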